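(* Let $E/\mathbb{Q}$ be the elliptic curve $y^2=x^3+a_4x+a_6$ with $a_4,a_6\in\mathbb{Z}$, let $(u,v)\in\mathbb{Z}^2$ be map-suitable for $E$, and suppose $-D_E(u,v)$ is a negative fundamental discriminant. Then: (1) For $P\in E(\mathbb{Q})\setminus\{\mathcal{O}\}$, the $\mathrm{SL}_2(\mathbb{Z})$-class in $\mathrm{CL}(-D_E(u,v))$ of the form $F_{P,\mu}$ depends only on $P$ and not on the choice of $\mu$; hence, setting $\Phi_{u,v}(\mathcal{O})$ to be the identity, this defines a map $\Phi_{u,v}:E(\mathbb{Q})\to\mathrm{CL}(-D_E(u,v))$. (2) If $P=(A/C^2,B/C^3)\neq\mathcal{O}$ and $\Phi_{u,v}(P)$ is the identity of $\mathrm{CL}(-D_E(u,v))$, then either $v\mid C$ or $\frac{va}{g^2}\ge d_E(u,v)$, where $a=Av+C^2u$ and $g=\gcd(C,v)$.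
   Context: For integers $u,v$ put $d_E(u,v):=v(u^3+a_4uv^2-a_6v^3)$ and $D_E(u,v):=4d_E(u,v)$. A pair $(u,v)\in\mathbb{Z}^2$ is map-suitable for $E$ if $u$, $v$, $3u^2+a_4v^2$ and $D_E(u,v)$ are all positive. Each $P\in E(\mathbb{Q})\setminus\{\mathcal{O}\}$ is written $P=(A/C^2,B/C^3)$ with $A,B,C\in\mathbb{Z}$, $C>0$, $\gcd(A,C)=\gcd(B,C)=1$; put $a=Av+C^2u$, $g=\gcd(C,v)$, and for an integer $\mu$ with $\frac{C^3}{g^2}\mu\equiv1\pmod{\frac{va}{g^2}}$ let $$F_{P,\mu}(x,y)=\frac{va}{g^2}x^2+2\mu\frac{Bv^2}{g^2}xy+\frac{\mu^2\frac{B^2v^4}{g^4}+d_E(u,v)}{\frac{va}{g^2}}y^2,$$ a positive definite integral form of discriminant $-D_E(u,v)$. $\mathrm{CL}(-D)$ is identified with the group of $\mathrm{SL}_2(\mathbb{Z})$-classes of primitive positive definite forms of discriminant $-D$. *)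

From Stdlib Require Import ZArith.
Open Scope Z_scope.

Definition dE (a4 a6 u v : Z) : Z := v * (u^3 + a4*u*v^2 - a6*v^3).
Definition DE (a4 a6 u v : Z) : Z := 4 * dE a4 a6 u v.

Definition nonsingular (a4 a6 : Z) : Prop := 4*a4^3 + 27*a6^2 <> 0.

Definition map_suitable (a4 a6 u v : Z) : Prop :=
  0 < u /\ 0 < v /\ 0 < 3*u^2 + a4*v^2 /\ 0 < DE a4 a6 u v.

Definition squarefree (n : Z) : Prop :=
  forall k : Z, (k * k | n) -> k = 1 \/ k = -1.

(* fundamental discriminant (Z.modulo is floor-mod, so nonnegative mod 4) *)
Definition fundamental_discriminant (D : Z) : Prop :=
  D <> 1 /\
  ((D mod 4 = 1 /\ squarefree D) \/
   (exists m, D = 4 * m /\ (m mod 4 = 2 \/ m mod 4 = 3) /\ squarefree m)).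

(* P = (A/C^2, B/C^3) in E(Q) \ {O}, written in lowest terms *)
Definition affine_point (a4 a6 A B C : Z) : Prop :=
  0 < C /\ Z.gcd A C = 1 /\ Z.gcd B C = 1 /\
  B^2 = A^3 + a4*A*C^4 + a6*C^6.

Definition qform := (Z * Z * Z)%type.

Definition qeval (F : qform) (x y : Z) : Z :=
  let '(a, b, c) := F in a*x^2 + b*x*y + c*y^2.

Definition qdisc (F : qform) : Z := let '(a, b, c) := F in b^2 - 4*a*c.

Definition primitive_pd (F : qform) : Prop :=
  let '(a, b, c) := F in 0 < a /\ Z.gcd (Z.gcd a b) c = 1.

Definition sl2_equiv (F G : qform) : Prop :=
  exists p q r s : Z, p*s - q*r = 1 /\
    forall x y, qeval G x y = qeval F (p*x + q*y) (r*x + s*y).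

(* principal form of discriminant -4 d : x^2 + d y^2 (identity of CL(-D)) *)
Definition principal_form (a4 a6 u v : Z) : qform := (1, 0, dE a4 a6 u v).

Definition a_of (u v A C : Z) : Z := A*v + C^2*u.
Definition g_of (v C : Z) : Z := Z.gcd C v.

Definition lead_of (u v A C : Z) : Z := v * a_of u v A C / (g_of v C)^2.

Definition mu_ok (u v A C mu : Z) : Prop :=
  (lead_of u v A C | (C^3 / (g_of v C)^2) * mu - 1).

Definition third_num (a4 a6 u v B C mu : Z) : Z :=
  mu^2 * (B^2 * v^4 / (g_of v C)^4) + dE a4 a6 u v.

Definition F_P (a4 a6 u v A B C mu : Z) : qform :=
  (lead_of u v A C,
   2 * mu * (B * v^2 / (g_of v C)^2),
   third_num a4 a6 u v B C mu / lead_of u v A C).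

From Stdlib Require Import ZArith Znumtheory Zpow_facts Lia.
Open Scope Z_scope.

(* Write g = gcd(C, v), C = g C1, v = g h and d = d_E(u, v).  Since
   d = -v^4 f(-u/v) for f(x) = x^3 + a4 x + a6, the factorisation
   f(x) - f(-u/v) = (x + u/v)(x^2 - x u/v + u^2/v^2 + a4) at x = A/C^2 becomes,
   cleared of denominators,
     (B h^2)^2 + d (g C1^3)^2 = L M,   L = v a / g^2 = h (A h + g C1^2 u).
   Hence beta = mu B h^2, with mu the inverse of g C1^3 modulo L, is a square
   root of -d modulo L, and F_{P,mu} = (L, 2 beta, (beta^2 + d) / L).  Changing
   mu modulo L moves beta by a multiple of L, i.e. translates x by a multiple
   of y.  If F_{P,mu} is principal, L is properly represented by x^2 + d y^2,
   so L = 1 (forcing h = 1, i.e. v | C) or L >= d.  L > 0 because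
   3 u^2 + a4 v^2 > 0 makes M positive whenever A h + g C1^2 u <= 0. *)

Lemma divide_mul_mono a b c d : (a | b) -> (c | d) -> (a * c | b * d).
Proof. intros [x ->] [y ->]. exists (x * y). ring. Qed.

Lemma squarefree_opp n : squarefree (- n) -> squarefree n.
Proof. intros Hsq k Hk. apply Hsq. now apply Z.divide_opp_r. Qed.

Lemma fundamental_discriminant_neg4 d :
  fundamental_discriminant (- (4 * d)) ->
  squarefree d /\ (d mod 4 = 1 \/ d mod 4 = 2).
Proof.
  intros [_ [[Hmod _] | (m & Hm & Hm4 & Hsq)]].
  - replace (- (4 * d)) with (- d * 4) in Hmod by ring.
    now rewrite Z.mod_mul in Hmod.
  - replace d with (- m) by lia. split.
    + apply squarefree_opp. now rewrite Z.opp_involutive.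
    + rewrite Z.mod_opp_l_nz; lia.
Qed.

Lemma four_mul_sub_sq_mod4 z b :
  (4 * z - b^2) mod 4 = 0 \/ (4 * z - b^2) mod 4 = 3.
Proof.
  destruct (Z.Even_or_Odd b) as [[k ->] | [k ->]].
  - left. symmetry. apply Z.mod_unique with (z - k^2); lia.
  - right. symmetry. apply Z.mod_unique with (z - k^2 - k - 1); lia.
Qed.

Lemma gcd_one_of_squarefree_mul n a b :
  squarefree n -> (a * b | n) -> Z.gcd a b = 1.
Proof.
  intros Hsq Hab.
  assert (Hk : (Z.gcd a b * Z.gcd a b | n)).
  { apply Z.divide_trans with (a * b); [|exact Hab].
    apply divide_mul_mono; [apply Z.gcd_divide_l | apply Z.gcd_divide_r]. }
  pose proof (Z.gcd_nonneg a b). destruct (Hsq _ Hk); lia.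
Qed.

Lemma primitive_of_disc a b c d :
  0 < a -> squarefree d -> (d mod 4 = 1 \/ d mod 4 = 2) ->
  qdisc (a, b, c) = - (4 * d) -> primitive_pd (a, b, c).
Proof.
  intros Ha Hsq Hmod Hdisc. split; [exact Ha|].
  change (b^2 - 4 * a * c = - (4 * d)) in Hdisc.
  set (k := Z.gcd (Z.gcd a b) c).
  assert (Hka : (k | a)) by (eapply Z.divide_trans; apply Z.gcd_divide_l).
  assert (Hkb : (k | b)).
  { eapply Z.divide_trans; [apply Z.gcd_divide_l | apply Z.gcd_divide_r]. }
  assert (Hkc : (k | c)) by apply Z.gcd_divide_r.
  assert (Hk0 : 0 <= k) by apply Z.gcd_nonneg.
  destruct (Z.Even_or_Odd k) as [[k' Hk'] | [k' Hk']].
  - exfalso.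
    assert (H2 : forall x, (k | x) -> exists y, x = 2 * y).
    { intros x [y ->]. exists (y * k'). lia. }
    destruct (H2 a Hka) as [a1 ->], (H2 b Hkb) as [b1 ->], (H2 c Hkc) as [c1 ->].
    replace d with (4 * (a1 * c1) - b1^2) in Hmod by lia.
    destruct (four_mul_sub_sq_mod4 (a1 * c1) b1); lia.
  - assert (Hkd4 : (k * k | 4 * d)).
    { replace (4 * d) with (a * (4 * c) - b * b) by lia.
      apply Z.divide_sub_r; apply divide_mul_mono; auto.
      now apply Z.divide_mul_r. }
    assert (Hk4 : Z.gcd (k * k) 4 = 1).
    { apply Z.bezout_1_gcd. exists 1, (- (k'^2 + k')). lia. }
    destruct (Hsq k (Z.gauss _ _ _ Hkd4 Hk4)); lia.
Qed.

Lemma sl2_equiv_translate a b c t :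
  sl2_equiv (a, b, c) (a, b + 2 * a * t, a * t^2 + b * t + c).
Proof. exists 1, t, 0, 1. split; [ring|]. intros x y. unfold qeval. ring. Qed.

Lemma sl2_equiv_same_lead a b c b' c' t :
  a <> 0 -> qdisc (a, b, c) = qdisc (a, b', c') -> b' = b + 2 * a * t ->
  sl2_equiv (a, b, c) (a, b', c').
Proof.
  intros Ha Hdisc ->.
  change (b^2 - 4 * a * c = (b + 2 * a * t)^2 - 4 * a * c') in Hdisc.
  replace c' with (a * t^2 + b * t + c); [apply sl2_equiv_translate|].
  apply (Z.mul_cancel_l _ _ (4 * a)); [lia | nia].
Qed.

(* Evaluating the principal form at (s, -r) gives a = s^2 + d r^2. *)
Lemma sl2_equiv_principal_lead a b c d :
  0 <= d -> sl2_equiv (a, b, c) (1, 0, d) -> a = 1 \/ d <= a.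
Proof.
  intros Hd (p & q & r & s & Hdet & Heq).
  specialize (Heq s (- r)). unfold qeval in Heq.
  replace (p * s + q * - r) with 1 in Heq by lia.
  replace (r * s + s * - r) with 0 in Heq by ring.
  destruct (Z.eq_dec r 0) as [-> | Hr].
  - left. assert (Hs : s = 1 \/ s = -1) by (apply Z.mul_eq_1 with p; lia).
    destruct Hs as [-> | ->]; lia.
  - right. assert (Hr2 : 1 <= r^2) by nia.
    assert (d * 1 <= d * r^2) by (apply Z.mul_le_mono_nonneg_l; lia).
    nia.
Qed.

Definition sqrt_form (L d beta : Z) : qform := (L, 2 * beta, (beta^2 + d) / L).

Lemma qdisc_sqrt_form L d beta :
  L <> 0 -> (L | beta^2 + d) -> qdisc (sqrt_form L d beta) = - (4 * d).
Proof.
  intros HL [w Hw]. unfold qdisc, sqrt_form. rewrite Hw, Z.div_mul by exact HL. lia.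
Qed.

Lemma sqrt_form_equiv L d beta1 beta2 :
  L <> 0 -> (L | beta1^2 + d) -> (L | beta2^2 + d) -> (L | beta2 - beta1) ->
  sl2_equiv (sqrt_form L d beta1) (sqrt_form L d beta2).
Proof.
  intros HL H1 H2 [t Ht].
  pose proof (qdisc_sqrt_form L d beta1 HL H1) as D1.
  pose proof (qdisc_sqrt_form L d beta2 HL H2) as D2.
  unfold sqrt_form in *. apply sl2_equiv_same_lead with t; [exact HL | congruence | lia].
Qed.

Lemma exists_inverse_mod c L : Z.gcd c L = 1 -> exists mu, (L | c * mu - 1).
Proof.
  intros Hc. apply Zgcd_1_rel_prime, rel_prime_bezout in Hc.
  destruct Hc as [x y Hxy]. exists x, (- y). lia.
Qed.

Lemma inverse_mod_congr L c mu1 mu2 :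
  Z.gcd c L = 1 -> (L | c * mu1 - 1) -> (L | c * mu2 - 1) -> (L | mu2 - mu1).
Proof.
  intros Hc H1 H2. apply (Z.gauss _ c); [|now rewrite Z.gcd_comm].
  replace (c * (mu2 - mu1)) with ((c * mu2 - 1) - (c * mu1 - 1)) by ring.
  now apply Z.divide_sub_r.
Qed.

Lemma sqrt_of_inverse L b c d mu :
  (L | b^2 + d * c^2) -> (L | c * mu - 1) -> (L | (mu * b)^2 + d).
Proof.
  intros Hrep Hinv.
  replace ((mu * b)^2 + d)
    with (mu^2 * (b^2 + d * c^2) - d * (c * mu + 1) * (c * mu - 1)) by ring.
  apply Z.divide_sub_r; now apply Z.divide_mul_r.
Qed.

Lemma rel_prime_mul_add p m h k :
  rel_prime p m -> rel_prime p h -> rel_prime p (m * h + k * p).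
Proof.
  intros Hm Hh. apply Zgcd_1_rel_prime. rewrite Z.gcd_add_mult_diag_r.
  now apply Zgcd_1_rel_prime, rel_prime_mult.
Qed.

Lemma pos_of_product_identity X Y P h N :
  0 < h -> 0 < Y -> 0 < P -> 0 < N ->
  N = h * (X + Y) * ((X + Y) * (X - 2 * Y) + P) -> 0 < X + Y.
Proof.
  intros Hh HY HP HN HNeq.
  destruct (Z_lt_le_dec 0 (X + Y)) as [|Hle]; [assumption|exfalso].
  assert (0 <= (X + Y) * (X - 2 * Y)) by (apply Z.mul_nonpos_nonpos; lia).
  assert (h * (X + Y) <= 0) by (apply Z.mul_nonneg_nonpos; lia).
  assert (h * (X + Y) * ((X + Y) * (X - 2 * Y) + P) <= 0)
    by (apply Z.mul_nonpos_nonneg; lia).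
  lia.
Qed.

Lemma gcd_split C v :
  0 < v -> exists g C1 h, 0 < g /\ C = g * C1 /\ v = g * h /\ Z.gcd C1 h = 1.
Proof.
  intros Hv. set (g := Z.gcd C v).
  assert (Hg : 0 < g).
  { pose proof (Z.gcd_nonneg C v).
    destruct (Z.eq_dec g 0) as [H0|]; [apply Z.gcd_eq_0_r in H0|]; lia. }
  exists g, (C / g), (v / g). repeat split.
  - exact Hg.
  - apply Zdivide_Zdiv_eq; [exact Hg | apply Z.gcd_divide_l].
  - apply Zdivide_Zdiv_eq; [exact Hg | apply Z.gcd_divide_r].
  - apply Z.gcd_div_gcd; [lia | reflexivity].
Qed.

Lemma g_of_split g C1 h : 0 <= g -> Z.gcd C1 h = 1 -> g_of (g * h) (g * C1) = g.
Proof.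
  intros Hg Hcop. unfold g_of.
  rewrite Z.gcd_mul_mono_l_nonneg, Hcop by exact Hg. ring.
Qed.

Section SplitPoint.

Variables a4 a6 u A B g C1 h : Z.
Hypothesis Hu : 0 < u.
Hypothesis Hg : 0 < g.
Hypothesis Hh : 0 < h.
Hypothesis HC1 : 0 < C1.
Hypothesis Hcop : Z.gcd C1 h = 1.
Hypothesis HAC : Z.gcd A (g * C1) = 1.
Hypothesis Hcurve : B^2 = A^3 + a4 * A * (g * C1)^4 + a6 * (g * C1)^6.
Hypothesis Hms : 0 < 3 * u^2 + a4 * (g * h)^2.
Hypothesis Hd : 0 < dE a4 a6 u (g * h).
Hypothesis Hsq : squarefree (dE a4 a6 u (g * h)).

Lemma curve_factorisation :
  (B * h^2)^2 + dE a4 a6 u (g * h) * (g * C1^3)^2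
  = h * (A * h + g * C1^2 * u)
    * ((A * h + g * C1^2 * u) * (A * h - 2 * (g * C1^2 * u))
       + g^2 * C1^4 * (3 * u^2 + a4 * (g * h)^2)).
Proof.
  replace ((B * h^2)^2) with (B^2 * h^4) by ring.
  rewrite Hcurve. unfold dE. ring.
Qed.

Lemma a_div_g_pos : 0 < A * h + g * C1^2 * u.
Proof.
  assert (HC1p : forall k, 0 <= k -> 0 < C1^k) by (intros; apply Z.pow_pos_nonneg; lia).
  assert (Hgp : forall k, 0 <= k -> 0 < g^k) by (intros; apply Z.pow_pos_nonneg; lia).
  refine (pos_of_product_identity (A * h) (g * C1^2 * u)
            (g^2 * C1^4 * (3 * u^2 + a4 * (g * h)^2)) h _ Hh _ _ _ curve_factorisation).
  - apply Z.mul_pos_pos; [apply Z.mul_pos_pos; [exact Hg | apply HC1p; lia] | exact Hu].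
  - apply Z.mul_pos_pos; [apply Z.mul_pos_pos; [apply Hgp | apply HC1p]; lia | exact Hms].
  - apply Z.add_nonneg_pos; [rewrite Z.pow_2_r; apply Z.square_nonneg|].
    apply Z.mul_pos_pos; [exact Hd|]. apply Z.pow_pos_nonneg; [|lia].
    apply Z.mul_pos_pos; [exact Hg | apply HC1p; lia].
Qed.

Lemma coprime_cube_lead : Z.gcd (g * C1^3) (h * (A * h + g * C1^2 * u)) = 1.
Proof.
  assert (HgC1A : rel_prime (g * C1) A).
  { apply Zgcd_1_rel_prime. now rewrite Z.gcd_comm. }
  assert (Hgh : rel_prime g h).
  { apply Zgcd_1_rel_prime, (gcd_one_of_squarefree_mul _ _ _ Hsq).
    exists (u^3 + a4 * u * (g * h)^2 - a6 * (g * h)^3). unfold dE. ring. }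
  assert (HC1h : rel_prime C1 h) by now apply Zgcd_1_rel_prime.
  assert (HgA : rel_prime g A).
  { apply rel_prime_div with (g * C1); [exact HgC1A | exists C1; ring]. }
  assert (HC1A : rel_prime C1 A).
  { apply rel_prime_div with (g * C1); [exact HgC1A | exists g; ring]. }
  assert (HgL : rel_prime g (h * (A * h + g * C1^2 * u))).
  { apply rel_prime_mult; [exact Hgh|].
    replace (A * h + g * C1^2 * u) with (A * h + (C1^2 * u) * g) by ring.
    now apply rel_prime_mul_add. }
  assert (HC1L : rel_prime C1 (h * (A * h + g * C1^2 * u))).
  { apply rel_prime_mult; [exact HC1h|].
    replace (A * h + g * C1^2 * u) with (A * h + (g * C1 * u) * C1) by ring.
    now apply rel_prime_mul_add. }
  apply Zgcd_1_rel_prime, rel_prime_sym, rel_prime_mult.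
  - now apply rel_prime_sym.
  - apply rel_prime_Zpower_r; [lia | now apply rel_prime_sym].
Qed.

Lemma div_g_pow_exact x y k : 0 <= k -> x = y * g^k -> x / g^k = y.
Proof.
  intros Hk Hx. symmetry. apply Z.div_unique_exact; [apply Z.pow_nonzero; lia|].
  rewrite Hx. ring.
Qed.

Lemma lead_of_split : lead_of u (g * h) A (g * C1) = h * (A * h + g * C1^2 * u).
Proof.
  unfold lead_of, a_of. rewrite g_of_split by lia.
  apply div_g_pow_exact; [lia | ring].
Qed.

Lemma mu_ok_split mu :
  mu_ok u (g * h) A (g * C1) mu <-> (h * (A * h + g * C1^2 * u) | g * C1^3 * mu - 1).
Proof.
  unfold mu_ok. rewrite lead_of_split, g_of_split by lia.
  rewrite (div_g_pow_exact ((g * C1)^3) (g * C1^3)) by (lia || ring). reflexivity.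
Qed.

Lemma third_num_split mu :
  third_num a4 a6 u (g * h) B (g * C1) mu = (mu * (B * h^2))^2 + dE a4 a6 u (g * h).
Proof.
  unfold third_num. rewrite g_of_split by lia.
  rewrite (div_g_pow_exact (B^2 * (g * h)^4) ((B * h^2)^2)) by (lia || ring). ring.
Qed.

Lemma F_P_split mu :
  F_P a4 a6 u (g * h) A B (g * C1) mu
  = sqrt_form (h * (A * h + g * C1^2 * u)) (dE a4 a6 u (g * h)) (mu * (B * h^2)).
Proof.
  unfold F_P, sqrt_form. rewrite third_num_split, lead_of_split, g_of_split by lia.
  rewrite (div_g_pow_exact (B * (g * h)^2) (B * h^2)) by (lia || ring).
  f_equal. f_equal. ring.
Qed.

End SplitPoint.

Lemma F_P_sqrt_form a4 a6 u v A B C :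
  0 < u -> 0 < v -> 0 < 3 * u^2 + a4 * v^2 -> 0 < dE a4 a6 u v ->
  squarefree (dE a4 a6 u v) -> affine_point a4 a6 A B C ->
  exists c b,
    0 < lead_of u v A C /\ Z.gcd c (lead_of u v A C) = 1 /\
    (lead_of u v A C | b^2 + dE a4 a6 u v * c^2) /\
    (forall mu, mu_ok u v A C mu <-> (lead_of u v A C | c * mu - 1)) /\
    (forall mu, third_num a4 a6 u v B C mu = (mu * b)^2 + dE a4 a6 u v) /\
    (forall mu,
       F_P a4 a6 u v A B C mu = sqrt_form (lead_of u v A C) (dE a4 a6 u v) (mu * b)) /\
    (lead_of u v A C = 1 -> (v | C)).
Proof.
  intros Hu Hv Hms Hd Hsq (HC & HAC & _ & Hcurve).
  destruct (gcd_split C v Hv) as (g & C1 & h & Hg & -> & -> & Hcop).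
  assert (HC1 : 0 < C1) by (apply (Z.mul_pos_cancel_l g); lia).
  assert (Hh : 0 < h) by (apply (Z.mul_pos_cancel_l g); lia).
  exists (g * C1^3), (B * h^2). rewrite lead_of_split by assumption.
  split; [|split; [|split; [|split; [|split; [|split]]]]].
  - apply Z.mul_pos_pos; [exact Hh | now apply (a_div_g_pos a4 a6 _ _ B)].
  - now apply (coprime_cube_lead a4 a6).
  - rewrite (curve_factorisation a4 a6 u A B g C1 h Hcurve).
    apply Z.divide_mul_l, Z.divide_refl.
  - intros mu. now apply mu_ok_split.
  - intros mu. now apply third_num_split.
  - intros mu. now apply F_P_split.
  - intros Hone. assert (h = 1) as -> by (apply Z.mul_eq_1 in Hone; lia).
    exists C1. ring.
Qed.

Theorem theorem2p3 (a4 a6 u v : Z) :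
  nonsingular a4 a6 ->
  map_suitable a4 a6 u v ->
  fundamental_discriminant (- DE a4 a6 u v) ->
  (* (1) well-defined map P |-> class of F_{P,mu} in CL(-D_E(u,v)) *)
  (forall A B C : Z, affine_point a4 a6 A B C ->
     (exists mu, mu_ok u v A C mu) /\
     (forall mu, mu_ok u v A C mu ->
        (lead_of u v A C | third_num a4 a6 u v B C mu) /\
        qdisc (F_P a4 a6 u v A B C mu) = - DE a4 a6 u v /\
        primitive_pd (F_P a4 a6 u v A B C mu)) /\
     (forall mu1 mu2, mu_ok u v A C mu1 -> mu_ok u v A C mu2 ->
        sl2_equiv (F_P a4 a6 u v A B C mu1) (F_P a4 a6 u v A B C mu2))) /\
  (* (2) trivial image forces v | C or v a / g^2 >= d_E(u,v) *)
  (forall A B C mu : Z, affine_point a4 a6 A B C -> mu_ok u v A C mu ->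
     sl2_equiv (F_P a4 a6 u v A B C mu) (principal_form a4 a6 u v) ->
     (v | C) \/ lead_of u v A C >= dE a4 a6 u v).
Proof.
  intros _ (Hu & Hv & Hms & HD) Hfund. unfold DE in *.
  destruct (fundamental_discriminant_neg4 _ Hfund) as [Hsq Hmod].
  assert (Hd : 0 < dE a4 a6 u v) by lia.
  split.
  - intros A B C HP.
    destruct (F_P_sqrt_form a4 a6 u v A B C Hu Hv Hms Hd Hsq HP)
      as (c & b & HL & Hc & Hrep & Hmu & Hthird & HF & _).
    assert (Hroot : forall mu, mu_ok u v A C mu ->
                    (lead_of u v A C | (mu * b)^2 + dE a4 a6 u v))
      by (intros mu Hok; apply (sqrt_of_inverse _ _ c), Hmu; assumption).
    split; [|split].
    + destruct (exists_inverse_mod _ _ Hc) as [mu Hinv]. exists mu. now apply Hmu.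
    + intros mu Hok. rewrite Hthird, HF.
      assert (Hdisc := qdisc_sqrt_form (lead_of u v A C) _ _ ltac:(lia) (Hroot mu Hok)).
      split; [|split]; [now apply Hroot | exact Hdisc |].
      now apply primitive_of_disc with (dE a4 a6 u v).
    + intros mu1 mu2 Hok1 Hok2. rewrite !HF.
      apply sqrt_form_equiv; [lia | auto | auto |].
      rewrite <- Z.mul_sub_distr_r. apply Z.divide_mul_l.
      apply (inverse_mod_congr _ c); [exact Hc | now apply Hmu ..].
  - intros A B C mu HP _ Hprinc.
    destruct (F_P_sqrt_form a4 a6 u v A B C Hu Hv Hms Hd Hsq HP)
      as (c & b & _ & _ & _ & _ & _ & HF & HvC).
    rewrite HF in Hprinc.
    destruct (sl2_equiv_principal_lead _ _ _ (dE a4 a6 u v) ltac:(lia) Hprinc);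
      [left; auto | right; lia].
Qed.
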